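(* For all $c>0$ and $b\ge\max\{c,2\}$, the function $g(x)=\frac{x+b}{x+c}$ on $[0,\infty)$ satisfies $x^2g''(x)-g(\alpha)\,g(x/\alpha)\le0$ for all $x\ge0$ and $\alpha>0$; i.e. $g\in\mathcal{T}^{+}$.
   Context: $\mathcal{T}^{+}$ is the set of functions $g:[0,\infty)\to[0,\infty)$ with $x^2g''(x)-g(\alpha)g(x/\alpha)\le0$ for all $x\ge0$, $\alpha>0$. *)

From Stdlib Require Import Reals.
From Coquelicot Require Import Coquelicot.
Open Scope R_scope.

(* The class T^+: functions g : [0,oo) -> [0,oo), twice differentiable,
   with x^2 g''(x) - g(alpha) g(x/alpha) <= 0 for all x >= 0, alpha > 0.
   Functions are represented as g : R -> R; only values on [0,oo) matter,
   except that the second derivative is the (two-sided) Coquelicot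
   derivative, which for g defined on a neighbourhood of [0,oo) agrees
   with the one-sided one at 0. *)
Definition in_Tplus (g : R -> R) : Prop :=
  (forall x, 0 <= x -> 0 <= g x) /\
  (forall x, 0 <= x -> ex_derive_n g 2 x) /\
  (forall x alpha, 0 <= x -> 0 < alpha ->
     x ^ 2 * Derive_n g 2 x - g alpha * g (x / alpha) <= 0).

From Stdlib Require Import Reals Lra Psatz.
From Coquelicot Require Import Coquelicot.
Open Scope R_scope.

(* For g x = (x + b) / (x + c) one has g'' x = 2 (b - c) / (x + c)^3, and
   g(alpha) g(x/alpha) = (alpha + b)(x + b alpha) / ((alpha + c)(x + c alpha)).
   Clearing denominators, the claim becomes a polynomial inequality.  Since
   (alpha + b)(x + b alpha) = alpha (b^2 + x) + b (alpha^2 + x), and likewise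
   with c, it splits into two inequalities in x alone, one weighted by alpha
   and one by alpha^2 + x; the second is essentially AM-GM in the form
   27 c x^2 <= 4 (x + c)^3. *)

Lemma AM_GM_cube (c x : R) : 0 <= c -> 0 <= x -> 27 * c * x ^ 2 <= 4 * (x + c) ^ 3.
Proof.
  intros hc hx.
  assert (0 <= (x - 2 * c) ^ 2 * (4 * x + c)) by (apply Rmult_le_pos; [apply pow2_ge_0 | lra]).
  replace (4 * (x + c) ^ 3) with (27 * c * x ^ 2 + (x - 2 * c) ^ 2 * (4 * x + c))
    by ring.
  lra.
Qed.

Lemma frac_lin_Tplus_poly_alpha_sq (b c x : R) :
  0 <= c -> c <= b -> 0 <= x -> 2 * (b - c) * c * x ^ 2 <= b * (x + c) ^ 3.
Proof.
  intros hc hcb hx.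
  assert (hamgm := AM_GM_cube c x hc hx).
  assert (0 <= c * x ^ 2) by (apply Rmult_le_pos; [lra | apply pow2_ge_0]).
  assert ((b - c) * (c * x ^ 2) <= b * (c * x ^ 2)) by nra.
  nra.
Qed.

Lemma frac_lin_Tplus_poly_alpha (b c x : R) :
  0 <= c -> c <= b -> 2 <= b -> 0 <= x ->
  2 * (b - c) * x ^ 2 * (x + c ^ 2) <= (x + c) ^ 3 * (b ^ 2 + x).
Proof.
  intros hc hcb hb hx.
  assert (hcube : x ^ 3 + 3 * c * x ^ 2 <= (x + c) ^ 3).
  { replace ((x + c) ^ 3) with (x ^ 3 + 3 * c * x ^ 2 + (3 * x * c ^ 2 + c ^ 3))
      by ring.
    assert (0 <= 3 * x * c ^ 2 + c ^ 3) by (apply Rplus_le_le_0_compat; nra).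
    lra. }
  (* b^2 - 2 (b - c) = b (b - 2) + 2 c *)
  assert (hlead : 2 * (b - c) * x ^ 3 <= b ^ 2 * x ^ 3).
  { apply Rmult_le_compat_r; [apply pow_le | nra]; lra. }
  assert (hmid : 2 * (b - c) * c * (c * x ^ 2) <= 3 * b ^ 2 * (c * x ^ 2)).
  { apply Rmult_le_compat_r; [apply Rmult_le_pos; [lra | apply pow2_ge_0] | nra]. }
  assert (b ^ 2 * (x ^ 3 + 3 * c * x ^ 2) <= b ^ 2 * (x + c) ^ 3).
  { apply Rmult_le_compat_l; [apply pow2_ge_0 | exact hcube]. }
  assert (0 <= (x + c) ^ 3 * x) by (apply Rmult_le_pos; [apply pow_le |]; lra).
  nra.
Qed.

Lemma frac_lin_Tplus_poly (b c x a : R) :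
  0 < c -> c <= b -> 2 <= b -> 0 <= x -> 0 < a ->
  2 * (b - c) * x ^ 2 * ((a + c) * (x + c * a)) <= (x + c) ^ 3 * ((a + b) * (x + b * a)).
Proof.
  intros hc hcb hb hx ha.
  assert (halpha := frac_lin_Tplus_poly_alpha b c x ltac:(lra) hcb hb hx).
  assert (halpha_sq := frac_lin_Tplus_poly_alpha_sq b c x ltac:(lra) hcb hx).
  replace ((a + b) * (x + b * a)) with (a * (b ^ 2 + x) + b * (a ^ 2 + x)) by ring.
  replace ((a + c) * (x + c * a)) with (a * (x + c ^ 2) + c * (a ^ 2 + x)) by ring.
  assert (0 <= a ^ 2 + x) by nra.
  nra.
Qed.

Lemma is_derive_frac_lin (b c y : R) :
  0 < y + c -> is_derive (fun x => (x + b) / (x + c)) y ((c - b) / (y + c) ^ 2).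
Proof. intros h. auto_derive; [lra | field; lra]. Qed.

Lemma is_derive_inv_sq (k c y : R) :
  0 < y + c -> is_derive (fun x => k / (x + c) ^ 2) y (- 2 * k / (y + c) ^ 3).
Proof. intros h. auto_derive; [nra | field; lra]. Qed.

Lemma is_derive_2_frac_lin (b c y : R) :
  0 < y + c -> is_derive_n (fun x => (x + b) / (x + c)) 2 y (2 * (b - c) / (y + c) ^ 3).
Proof.
  intros h. simpl.
  apply is_derive_ext_loc with (fun x => (c - b) / (x + c) ^ 2).
  - apply filter_imp with (P := fun t => - c < t).
    + intros t ht. symmetry. apply is_derive_unique, is_derive_frac_lin. lra.
    + apply (open_gt (- c)). lra.
  - replace (2 * (b - c)) with (- 2 * (c - b)) by ring.
    apply is_derive_inv_sq, h.
Qed.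

Theorem lemma11 (b c : R) (hc : 0 < c) (hb : Rmax c 2 <= b) :
  in_Tplus (fun x => (x + b) / (x + c)).
Proof.
  assert (hcb : c <= b) by (eapply Rle_trans; [apply Rmax_l | exact hb]).
  assert (hb2 : 2 <= b) by (eapply Rle_trans; [apply Rmax_r | exact hb]).
  split; [| split].
  - intros x hx. apply Rdiv_le_0_compat; lra.
  - intros x hx. eexists. apply is_derive_2_frac_lin. lra.
  - intros x a hx ha.
    rewrite (is_derive_n_unique _ _ _ _ (is_derive_2_frac_lin b c x ltac:(lra))).
    cbv beta.
    assert (0 < c * a) by (apply Rmult_lt_0_compat; lra).
    assert (hden : 0 < (x + c) ^ 3 * ((a + c) * (x + c * a)))
      by (apply Rmult_lt_0_compat; [apply pow_lt | apply Rmult_lt_0_compat]; lra).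
    assert (hpoly := frac_lin_Tplus_poly b c x a hc hcb hb2 hx ha).
    replace (x ^ 2 * (2 * (b - c) / (x + c) ^ 3)
             - (a + b) / (a + c) * ((x / a + b) / (x / a + c)))
      with (- (((x + c) ^ 3 * ((a + b) * (x + b * a))
                - 2 * (b - c) * x ^ 2 * ((a + c) * (x + c * a)))
               / ((x + c) ^ 3 * ((a + c) * (x + c * a)))))
      by (field; repeat split; lra).
    assert (0 <= ((x + c) ^ 3 * ((a + b) * (x + b * a))
                  - 2 * (b - c) * x ^ 2 * ((a + c) * (x + c * a)))
                 / ((x + c) ^ 3 * ((a + c) * (x + c * a))))
      by (apply Rdiv_le_0_compat; lra).
    lra.
Qed.
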